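(* Let $xy\in\{0,1\}^n$ be a characteristic string. Then there is an $x$-balanced fork $F\vdash xy$ if and only if $\mu_x(y)\ge0$.
   Context: Characteristic strings and forks. A characteristic string is $w=w_1\dots w_n\in\{0,1\}^n$; index $i$ is honest if $w_i=0$ and adversarial if $w_i=1$. A fork for $w$ is a rooted tree with edges directed away from the root $r$ and labeling $\ell:V\to\{0,\dots,n\}$ with (F1) $\ell(r)=0$; (F2) labels strictly increasing along directed paths; (F3) each honest index labels exactly one vertex; (F4) for honest $i<j$ the vertex labeled $i$ has strictly smaller depth than the vertex labeled $j$. Write $F\vdash w$. A vertex is honest if it is the root or labeled by an honest index. A tine is a directed path from the root; its length is its number of edges, $\ell(t)$ the label of its last vertex; $\mathrm{height}(F)$ is the maximum tine length. A fork is closed if every leaf is honest; a closed fork has a unique longest tine $\hat t$. For closed $F\vdash w$ and tine $t$: $\mathrm{gap}(t)=\mathrm{length}(\hat t)-\mathrm{length}(t)$, $\mathrm{reserve}(t)=|\{i:w_i=1,\ i>\ell(t)\}|$, $\mathrm{reach}(t)=\mathrm{reserve}(t)-\mathrm{gap}(t)$. For $w=xy$, tines $t_1,t_2$ are disjoint over $y$ (written $t_1\not\sim_x t_2$) if they share no edge terminating at a vertex with label $>|x|$ (a tine may be paired with itself). $\mu_x(F)=\max\min\{\mathrm{reach}(t_1),\mathrm{reach}(t_2)\}$ over pairs disjoint over $y$, and $\mu_x(y)=\max\{\mu_x(F):F\vdash xy\text{ closed}\}$. A fork $F\vdash xy$ is $x$-balanced if it contains tines $t_1\not\sim_x t_2$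 with $\mathrm{length}(t_1)=\mathrm{length}(t_2)=\mathrm{height}(F)$. *)

From mathcomp Require Import all_boot all_order all_algebra.
Set Implicit Arguments. Unset Strict Implicit. Unset Printing Implicit Defensive.
Import Order.TTheory GRing.Theory Num.Theory.

(* Characteristic strings: w : seq bool, [true] = adversarial (1), [false] = honest (0).
   Indices are 1-based: w_i = nth true w i.-1 for 1 <= i <= size w. *)
Definition adv (w : seq bool) (i : nat) : bool :=
  (0 < i <= size w) && nth false w i.-1.
Definition honest_idx (w : seq bool) (i : nat) : bool :=
  (0 < i <= size w) && ~~ nth true w i.-1.

(* A rooted tree with vertex set {0,...,fsize}, root 0, and each non-root
   vertex v having parent par v < v (edge par v -> v); plus a labeling. *)
Record fork_data := ForkData {
  fsize : nat;
  par : nat -> nat;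
  lab : nat -> nat }.

Definition vert (F : fork_data) : seq nat := iota 0 (fsize F).+1.

Fixpoint depth_aux (p : nat -> nat) (k v : nat) : nat :=
  match k with
  | 0 => 0
  | k'.+1 => if v == 0 then 0 else (depth_aux p k' (p v)).+1
  end.

Definition depth (F : fork_data) (v : nat) : nat := depth_aux (par F) v v.

Definition is_fork (w : seq bool) (F : fork_data) : Prop :=
  (forall v, 0 < v <= fsize F -> par F v < v) /\
  (forall v, v <= fsize F -> lab F v <= size w) /\
  lab F 0 = 0 /\
  (forall v, 0 < v <= fsize F -> lab F (par F v) < lab F v) /\
  (forall i, honest_idx w i -> count (fun v => lab F v == i) (vert F) = 1) /\
  (forall u v, u <= fsize F -> v <= fsize F ->
     honest_idx w (lab F u) -> honest_idx w (lab F v) ->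
     lab F u < lab F v -> depth F u < depth F v).

Definition honest_vertex (w : seq bool) (F : fork_data) (v : nat) : bool :=
  (v == 0) || honest_idx w (lab F v).

Definition is_leaf (F : fork_data) (v : nat) : bool :=
  ~~ has (fun u => (u != 0) && (par F u == v)) (vert F).

Definition closed_fork (w : seq bool) (F : fork_data) : Prop :=
  forall v, v <= fsize F -> is_leaf F v -> honest_vertex w F v.

(* Tines are identified with their terminal vertex v (the unique root-to-v path). *)
Definition height (F : fork_data) : nat := \max_(v <- vert F) depth F v.

Definition on_tine (F : fork_data) (u v : nat) : bool :=
  has (fun k => iter k (par F) v == u) (iota 0 v.+1).

(* tines t1, t2 (ending at v1, v2) are disjoint over y, where w = x y:
   they share no edge terminating at a vertex labeled > |x|.
   The edges of a tine are in bijection with its non-root vertices. *)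
Definition disjoint_over (x : seq bool) (F : fork_data) (v1 v2 : nat) : bool :=
  ~~ has (fun u => [&& u != 0, size x < lab F u, on_tine F u v1 & on_tine F u v2])
         (vert F).

Definition gap (F : fork_data) (v : nat) : nat := height F - depth F v.

Definition reserve (w : seq bool) (F : fork_data) (v : nat) : nat :=
  count (fun i => adv w i) (iota (lab F v).+1 (size w - lab F v)).

Definition reach (w : seq bool) (F : fork_data) (v : nat) : int :=
  ((reserve w F v)%:Z - (gap F v)%:Z)%R.

(* mu_x(F): max over pairs of tines disjoint over y of min(reach t1, reach t2).
   The pair (root, root) is always disjoint over y, so seeding the max with its
   value does not change it. *)
Definition mu_fork (x y : seq bool) (F : fork_data) : int :=
  \big[Num.max/Num.min (reach (x ++ y) F 0) (reach (x ++ y) F 0)]_(v1 <- vert F)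
   \big[Num.max/Num.min (reach (x ++ y) F 0) (reach (x ++ y) F 0)]_(v2 <- vert F | disjoint_over x F v1 v2)
     Num.min (reach (x ++ y) F v1) (reach (x ++ y) F v2).

Definition is_mu (x y : seq bool) (m : int) : Prop :=
  (exists F, is_fork (x ++ y) F /\ closed_fork (x ++ y) F /\ mu_fork x y F = m) /\
  (forall F, is_fork (x ++ y) F -> closed_fork (x ++ y) F -> (mu_fork x y F <= m)%R).

Definition x_balanced (x : seq bool) (F : fork_data) : Prop :=
  exists v1 v2, v1 <= fsize F /\ v2 <= fsize F /\ disjoint_over x F v1 v2 /\
    depth F v1 = height F /\ depth F v2 = height F.

From mathcomp Require Import all_boot all_order all_algebra.
From mathcomp Require Import zify.
From Stdlib Require Import Classical.
Import Order.TTheory GRing.Theory Num.Theory.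
Set Implicit Arguments. Unset Strict Implicit. Unset Printing Implicit Defensive.

(* If F is x-balanced, witnessed by maximal tines t1, t2 disjoint over y, prune F to the
   closed fork formed by the tines of its honest vertices. The last honest vertex h_i of t_i
   survives, and every vertex of t_i after h_i carries an adversarial label, so
   reserve(h_i) >= length(t_i) - length(h_i) >= gap(h_i) in the pruned fork: the pair
   (h1, h2) is still disjoint over y and has nonnegative reach, hence mu_x(y) >= 0 (the
   maximum defining mu_x(y) exists because reaches are bounded by |xy|).
   Conversely, if a closed fork has tines t1, t2 disjoint over y with nonnegative reach,
   extend each t_i by a path of gap(t_i) new vertices labelled by adversarial indices after
   l(t_i), which exist since reserve(t_i) >= gap(t_i); the extended tines are maximal and
   still disjoint over y. *)

(** * Ancestry and depth *)

Definition is_tree (F : fork_data) : Prop :=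
  forall v, 0 < v <= fsize F -> par F v < v.

Definition rooted_tree (F : fork_data) : Prop := is_tree F /\ par F 0 = 0.

Definition rooted_fork (w : seq bool) (F : fork_data) : Prop := is_fork w F /\ par F 0 = 0.

Lemma rooted_fork_tree w F : rooted_fork w F -> rooted_tree F.
Proof. by case=> [[Ht _] H0]. Qed.

Definition ancestor (p : nat -> nat) (a c : nat) : Prop := exists k, iter k p c = a.

Lemma ancestor_refl p a : ancestor p a a.
Proof. by exists 0. Qed.

Lemma ancestor_trans p a b c : ancestor p a b -> ancestor p b c -> ancestor p a c.
Proof. by move=> [k1 <-] [k2 <-]; exists (k1 + k2); rewrite iterD. Qed.

Lemma ancestor_par p a c : ancestor p a (p c) -> ancestor p a c.
Proof. by move=> [k <-]; exists k.+1; rewrite iterSr. Qed.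

Lemma iter_par_le F k c : rooted_tree F -> c <= fsize F -> iter k (par F) c <= c - k.
Proof.
move=> [Ht H0] Hc; elim: k => [|k IH]; first by rewrite subn0.
rewrite iterS; set a := iter k (par F) c in IH *.
case: (posnP a) => [->|Ha]; first by rewrite H0.
by have := Ht a ltac:(lia); lia.
Qed.

Lemma ancestor_le F a c : rooted_tree F -> c <= fsize F -> ancestor (par F) a c -> a <= c.
Proof. by move=> HF Hc [k <-]; have := iter_par_le k HF Hc; lia. Qed.

Lemma on_tineP F a c : rooted_tree F -> c <= fsize F ->
  reflect (ancestor (par F) a c) (on_tine F a c).
Proof.
move=> HF Hc; apply: (iffP hasP) => [[k _ /eqP <-]|[k Hk]]; first by exists k.
case: (leqP k c) => Hkc; first by exists k; [rewrite mem_iota; lia | apply/eqP].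
exists c; first by rewrite mem_iota; lia.
have := iter_par_le k HF Hc; have := iter_par_le c HF Hc.
by rewrite -Hk subnn; move=> h1 h2; apply/eqP; lia.
Qed.

Lemma depth_aux_eq p q k v : (forall z, 0 < z <= v -> p z = q z /\ p z < z) ->
  depth_aux p k v = depth_aux q k v.
Proof.
elim: k v => [|k IH] v H //=; case: eqP => // /eqP Hv.
have [E L] := H v ltac:(lia).
by rewrite -E IH // => z Hz; apply: H; lia.
Qed.

Lemma depth_aux_fuel p k k' v : (forall z, 0 < z <= v -> p z < z) -> v <= k -> v <= k' ->
  depth_aux p k v = depth_aux p k' v.
Proof.
elim: k k' v => [|k IH] [|k'] v H Hk Hk' //=; try by have -> : v = 0 by lia.
case: eqP => // /eqP Hv; have L := H v ltac:(lia).
by congr S; apply: IH; try lia; move=> z Hz; apply: H; lia.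
Qed.

Lemma depth_par F v : is_tree F -> 0 < v <= fsize F -> depth F v = (depth F (par F v)).+1.
Proof.
move=> Ht Hv; rewrite /depth; case: v Hv => [|v] Hv; first by lia.
rewrite [LHS]/=; congr S; have L := Ht v.+1 Hv.
by apply: depth_aux_fuel; try lia; move=> z Hz; apply: Ht; lia.
Qed.

Lemma depth_le_height F v : v <= fsize F -> depth F v <= height F.
Proof. by move=> Hv; apply: (leq_bigmax_seq v) => //; rewrite mem_iota; lia. Qed.

Lemma height_le F B : (forall v, v <= fsize F -> depth F v <= B) -> height F <= B.
Proof. by move=> H; apply/bigmax_leqP_seq => v; rewrite mem_iota => Hv _; apply: H; lia. Qed.

Lemma disjoint_over_ancestor x F v1 v2 a1 a2 : rooted_tree F ->
  v1 <= fsize F -> v2 <= fsize F -> disjoint_over x F v1 v2 ->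
  ancestor (par F) a1 v1 -> ancestor (par F) a2 v2 -> disjoint_over x F a1 a2.
Proof.
move=> HF Hv1 Hv2 /hasPn Hdis A1 A2; apply/hasPn => u Hu.
have tine a v : v <= fsize F -> ancestor (par F) a v -> on_tine F u a -> on_tine F u v.
  move=> Hv A /(on_tineP _ HF (leq_trans (ancestor_le HF Hv A) Hv)) Au.
  by apply/(on_tineP _ HF Hv); apply: ancestor_trans Au A.
by apply: contra (Hdis u Hu) => /and4P [-> -> /(tine _ _ Hv1 A1) -> /(tine _ _ Hv2 A2) ->].
Qed.

(* [is_fork] does not constrain [par F 0], so [on_tine] may see spurious ancestors of the
   root; redirecting [par F 0] to [0] changes no depth and only removes them. *)
Definition fix_root (F : fork_data) : fork_data :=
  ForkData (fsize F) (fun z => if z == 0 then 0 else par F z) (lab F).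

Lemma depth_fix_root F v : is_tree F -> v <= fsize F -> depth (fix_root F) v = depth F v.
Proof.
move=> Ht Hv; rewrite /depth; apply: depth_aux_eq => z Hz /=.
have -> : (z == 0) = false by apply/eqP; lia.
by split=> //; apply: Ht; lia.
Qed.

Lemma height_fix_root F : is_tree F -> height (fix_root F) = height F.
Proof.
move=> Ht; apply: eq_big_seq => z; rewrite mem_iota => Hz.
by apply: depth_fix_root => //; lia.
Qed.

Lemma reach_fix_root w F v : is_tree F -> v <= fsize F -> reach w (fix_root F) v = reach w F v.
Proof. by move=> Ht Hv; rewrite /reach /gap height_fix_root // depth_fix_root. Qed.

Lemma fix_root_fork w F : is_fork w F -> rooted_fork w (fix_root F).
Proof.
move=> [Ht [Hl [H1 [H2 [H3 H4]]]]]; split => //.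
have nz v : 0 < v -> (v == 0) = false by move=> H; apply/eqP; lia.
split=> [v Hv /=|]; first by rewrite nz; [apply: Ht | lia].
do 2 split=> //; split=> [v Hv /=|]; first by rewrite nz; [apply: H2 | lia].
by split=> // u v Hu Hv hu hv huv; rewrite !depth_fix_root //; apply: H4.
Qed.

Lemma iter_fix_root F k c : iter k (par (fix_root F)) c != 0 ->
  iter k (par F) c = iter k (par (fix_root F)) c.
Proof.
elim: k => [|k IH] //; rewrite !iterS.
case: (iter k (par (fix_root F)) c =P 0) => [-> //|/eqP Hne _].
by rewrite IH //= (negbTE Hne).
Qed.

Lemma disjoint_fix_root x F a b : disjoint_over x F a b -> disjoint_over x (fix_root F) a b.
Proof.
have tine u c : u != 0 -> on_tine (fix_root F) u c -> on_tine F u c.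
  move=> Hu /hasP [k Hk /eqP E]; apply/hasP; exists k => //.
  by rewrite iter_fix_root E ?eqxx.
move=> /hasPn H; apply/hasPn => u Hu; apply/negP => /and4P [Hu0 Hl T1 T2].
by move: (H u Hu); rewrite Hu0 Hl (tine u a) // (tine u b).
Qed.

(** * Adversarial indices *)

Definition adv_count (w : seq bool) (a b : nat) : nat := count (adv w) (iota a.+1 (b - a)).

Lemma reserveE w F v : reserve w F v = adv_count w (lab F v) (size w).
Proof. by []. Qed.

Lemma reach_ge0 w F v : (0 <= reach w F v)%R = (gap F v <= reserve w F v).
Proof. by rewrite /reach subr_ge0 lez_nat. Qed.

Lemma adv_count_split w a b c : a <= b <= c -> adv_count w a c = adv_count w a b + adv_count w b c.
Proof.
move=> H; rewrite /adv_count.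
have -> : c - a = (b - a) + (c - b) by lia.
by rewrite iotaD count_cat; congr (_ + count _ (iota _ _)); lia.
Qed.

Lemma adv_count_gt0 w b c : b < c -> adv w c -> 0 < adv_count w b c.
Proof. by move=> H A; rewrite -has_count; apply/hasP; exists c; rewrite // mem_iota; lia. Qed.

Lemma adv_count_le w a c : adv_count w a c <= c.
Proof. by apply: leq_trans (count_size _ _) _; rewrite size_iota; lia. Qed.

Lemma adv_countS w a n : a < n -> adv_count w a n = adv w a.+1 + adv_count w a.+1 n.
Proof. by move=> H; rewrite /adv_count; have -> : n - a = (n - a.+1).+1 by lia. Qed.

Lemma adv_count_next w g a n : g < adv_count w a n ->
  exists l, [/\ a < l <= n, adv w l & g <= adv_count w l n].
Proof.
move: {2}(n - a) (erefl (n - a)) => d; elim: d a => [|d IH] a Hd H.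
  by move: H; rewrite /adv_count Hd.
rewrite adv_countS in H; last by lia.
case A: (adv w a.+1) in H.
  by exists a.+1; split => //; lia.
have [|l [Hl Al Hg]] := IH a.+1 _ H; first by lia.
by exists l; split => //; lia.
Qed.

Lemma adv_honest w l : 0 < l <= size w -> adv w l = ~~ honest_idx w l.
Proof. by move=> Hl; rewrite /adv /honest_idx Hl negbK (set_nth_default true) //; lia. Qed.

Lemma adv_range w l : adv w l -> 0 < l <= size w.
Proof. by case/andP. Qed.

Lemma last_honest_ancestor w F v : is_fork w F -> v <= fsize F ->
  exists h, [/\ honest_vertex w F h, ancestor (par F) h v, lab F h <= lab F v &
    depth F v <= depth F h + adv_count w (lab F h) (lab F v)].
Proof.
move=> [Ht [Hl [_ [H2 _]]]]; elim/ltn_ind: v => v IH Hv.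
case Hh: (honest_vertex w F v).
  by exists v; split=> //; [exact: ancestor_refl | rewrite /adv_count subnn; lia].
have Hv0 : 0 < v by case: (posnP v) Hh => // ->.
have Hpv := Ht v ltac:(lia); have Hl2 := H2 v ltac:(lia).
have [h [Hh' Ha Hlab Hd]] := IH (par F v) Hpv ltac:(lia).
have A : adv w (lab F v).
  rewrite adv_honest; last by have := Hl v Hv; lia.
  by apply: contraFN Hh => Hi; rewrite /honest_vertex Hi orbT.
exists h; split; [done | exact: ancestor_par | exact: ltnW (leq_ltn_trans Hlab Hl2) |].
rewrite (depth_par Ht) ?Hv0 // (adv_count_split w (b := lab F (par F v))); last first.
  by rewrite Hlab ltnW.
by have := adv_count_gt0 Hl2 A; lia.
Qed.

(** * Growing a fork by adversarial paths *)

Definition extends (F F' : fork_data) : Prop :=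
  fsize F <= fsize F' /\ forall z, z <= fsize F -> par F' z = par F z /\ lab F' z = lab F z.

Lemma extends_trans F1 F2 F3 : extends F1 F2 -> extends F2 F3 -> extends F1 F3.
Proof.
move=> [s1 h1] [s2 h2]; split => [|z Hz]; first by lia.
by have [-> ->] := h2 z ltac:(lia); apply: h1.
Qed.

Lemma depth_extends F F' z : is_tree F -> extends F F' -> z <= fsize F ->
  depth F' z = depth F z.
Proof.
move=> Ht [_ h] Hz; rewrite /depth; symmetry; apply: depth_aux_eq => u Hu.
by split; [rewrite (h u _).1 | apply: Ht]; lia.
Qed.

Lemma ancestor_extends F F' a c : rooted_tree F -> extends F F' -> c <= fsize F ->
  ancestor (par F') a c <-> ancestor (par F) a c.
Proof.
move=> HF [_ h] Hc.
have E k : iter k (par F') c = iter k (par F) c.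
  elim: k => [|k IH] //=; rewrite IH (h _ _).1 //.
  by have := iter_par_le k HF Hc; lia.
by split => -[k Hk]; exists k; rewrite ?E // -E.
Qed.

Definition add_leaf (F : fork_data) (p l : nat) : fork_data := ForkData (fsize F).+1
  (fun z => if z == (fsize F).+1 then p else par F z)
  (fun z => if z == (fsize F).+1 then l else lab F z).

Lemma add_leaf_extends F p l : extends F (add_leaf F p l).
Proof.
split => /= [|z Hz]; first by lia.
by have -> : (z == (fsize F).+1) = false by apply/eqP; lia.
Qed.

Lemma add_leaf_rooted F p l : rooted_tree F -> p <= fsize F -> rooted_tree (add_leaf F p l).
Proof.
move=> [Ht H0] Hp; split => [v /= Hv|] /=; last by rewrite H0.
by case: eqP => [->|/eqP Hne]; [lia | apply: Ht; lia].
Qed.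

Lemma depth_add_leaf F p l : rooted_tree F -> p <= fsize F ->
  depth (add_leaf F p l) (fsize F).+1 = (depth F p).+1.
Proof.
move=> HF Hp; have [Ht' _] := add_leaf_rooted l HF Hp.
rewrite (depth_par Ht') /= ?eqxx; last by lia.
by rewrite (depth_extends _ (add_leaf_extends F p l)) //; case: HF.
Qed.

Lemma vert_add_leaf F p l : vert (add_leaf F p l) = vert F ++ [:: (fsize F).+1].
Proof. by rewrite /vert [fsize _]/= -(addn1 (fsize F).+1) iotaD. Qed.

Lemma height_add_leaf F p l : rooted_tree F -> p <= fsize F ->
  height (add_leaf F p l) = maxn (height F) (depth F p).+1.
Proof.
move=> HF Hp; rewrite /height vert_add_leaf big_cat big_seq1 depth_add_leaf //.
congr maxn; apply: eq_big_seq => z.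
rewrite mem_iota => Hz; apply: depth_extends; [by case: HF | exact: add_leaf_extends | lia].
Qed.

Lemma ancestor_add_leaf F p l a : rooted_tree F -> p <= fsize F ->
  ancestor (par (add_leaf F p l)) a (fsize F).+1 -> a = (fsize F).+1 \/ ancestor (par F) a p.
Proof.
move=> HF Hp [[|k] Hk]; first by left.
right; move: Hk; rewrite iterSr /= eqxx => Hk.
by apply/(ancestor_extends _ HF (add_leaf_extends F p l) Hp); exists k.
Qed.

Lemma add_leaf_fork w F p l : rooted_fork w F -> p <= fsize F ->
  lab F p < l -> adv w l -> rooted_fork w (add_leaf F p l).
Proof.
move=> [[Ht [Hl [H1 [H2 [H3 H4]]]]] H0] Hp Hlp A.
have HF : rooted_tree F by [].
have [Ht' _] := add_leaf_rooted l HF Hp.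
have Hls := adv_range A; have NH : ~~ honest_idx w l by rewrite -adv_honest.
have old z : z <= fsize F -> (z == (fsize F).+1) = false by move=> Hz; apply/eqP; lia.
split=> //; split=> //; split=> [v /= Hv|].
  by case: eqP => [_|/eqP Hne]; [lia | apply: Hl; lia].
split=> //; split=> [v /= Hv|].
  case: (v =P (fsize F).+1) => [_|/eqP Hne]; first by rewrite old.
  by rewrite old; [apply: H2; lia | have := Ht v ltac:(lia); lia].
split=> [i Hi|u v Hu Hv].
  rewrite vert_add_leaf count_cat -[RHS](H3 i Hi) -[RHS]addn0; congr addn.
    by apply: eq_in_count => z; rewrite mem_iota /= => Hz; rewrite old //; lia.
  by rewrite /= eqxx; case: eqP NH => // ->; rewrite Hi.
have oldv z : z <= (fsize F).+1 -> honest_idx w (lab (add_leaf F p l) z) -> z <= fsize F.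
  by move=> Hz /=; case: eqP => [_ Hh|/eqP]; [move: NH; rewrite Hh | lia].
move=> hu hv; have Hu' := oldv u Hu hu; have Hv' := oldv v Hv hv.
move: hu hv; rewrite /= !old // => hu hv huv.
by rewrite !(depth_extends _ (add_leaf_extends F p l)) //; apply: H4.
Qed.

Lemma adversarial_path w g F v : rooted_fork w F -> v <= fsize F ->
  g <= adv_count w (lab F v) (size w) ->
  exists F' e, [/\ rooted_fork w F', extends F F', e <= fsize F',
    depth F' e = depth F v + g & height F' = maxn (height F) (depth F v + g)] /\
    forall u, u <= fsize F -> ancestor (par F') u e -> ancestor (par F) u v.
Proof.
elim: g F v => [|g IH] F v HF Hv Hg.
  exists F, v; rewrite addn0; split=> [|//]; split=> //.
  by have := depth_le_height Hv; lia.
have [l [Hl A Hgl]] := adv_count_next Hg.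
have HT := rooted_fork_tree HF.
have HF1 : rooted_fork w (add_leaf F v l) by apply: add_leaf_fork => //; lia.
have Hg1 : g <= adv_count w (lab (add_leaf F v l) (fsize F).+1) (size w) by rewrite /= eqxx.
have [F' [e [[HF' X He Hd Hh] Ha]]] := IH _ _ HF1 (leqnn _) Hg1.
exists F', e; split; first split => //.
- exact: extends_trans (add_leaf_extends F v l) X.
- by rewrite Hd depth_add_leaf //; lia.
- by rewrite Hh depth_add_leaf // height_add_leaf //; lia.
move=> u Hu /(Ha u (leqW Hu)) /(ancestor_add_leaf HT Hv) [E|//]; lia.
Qed.

Lemma extend_to_height w F v : rooted_fork w F -> v <= fsize F ->
  gap F v <= reserve w F v ->
  exists F' e, [/\ rooted_fork w F', extends F F', e <= fsize F',
    depth F' e = height F & height F' = height F] /\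
    forall u, u <= fsize F -> ancestor (par F') u e -> ancestor (par F) u v.
Proof.
move=> HF Hv Hg; have [F' [e [[HF' X He Hd Hh] Ha]]] := adversarial_path HF Hv Hg.
have Hdv := depth_le_height Hv.
by exists F', e; split; first split; rewrite // ?Hd ?Hh /gap; lia.
Qed.

Lemma balanced_of_reach_ge0_rooted x y F v1 v2 : rooted_fork (x ++ y) F ->
  v1 <= fsize F -> v2 <= fsize F -> disjoint_over x F v1 v2 ->
  (0 <= reach (x ++ y) F v1)%R -> (0 <= reach (x ++ y) F v2)%R ->
  exists F', is_fork (x ++ y) F' /\ x_balanced x F'.
Proof.
set w := x ++ y; rewrite !reach_ge0 => HF Hv1 Hv2 Hdis R1 R2.
have [F1 [e1 [[HF1 X1 He1 Hd1 Hh1] Ha1]]] := extend_to_height HF Hv1 R1.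
have [s1 a1] := X1; have Hv2' : v2 <= fsize F1 by lia.
have R2' : gap F1 v2 <= reserve w F1 v2.
  rewrite /gap /reserve Hh1 (a1 v2 Hv2).2 (depth_extends _ X1) //.
  by case: (rooted_fork_tree HF).
have [F2 [e2 [[HF2 X2 He2 Hd2 Hh2] Ha2]]] := extend_to_height HF1 Hv2' R2'.
have T0 := rooted_fork_tree HF; have T1 := rooted_fork_tree HF1.
have T2 := rooted_fork_tree HF2.
have He1' : e1 <= fsize F2 by case: X2 => ? _; lia.
exists F2; split; first by case: HF2.
exists e1, e2; do 2 split=> //; split; last split.
- (* A common vertex of the extended tines is old, so it lies on both original tines. *)
  apply/hasPn => u Hu; apply/negP.
  move=> /and4P [Hu0 Hl /(on_tineP _ T2 He1') A1 /(on_tineP _ T2 He2) A2].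
  move/(ancestor_extends _ T1 X2 He1): A1 => A1.
  have /Ha2 /(_ A2) A2' : u <= fsize F1 by have := ancestor_le T1 He1 A1; lia.
  have Hu' : u <= fsize F by have := ancestor_le T1 Hv2' A2'; lia.
  move/(ancestor_extends _ T0 X1 Hv2): A2' => A2'.
  have A1' := Ha1 u Hu' A1.
  move/hasPn: Hdis => /(_ u ltac:(rewrite mem_iota; lia)).
  have [_ Lu] := (extends_trans X1 X2).2 u Hu'.
  by rewrite Hu0 -Lu Hl (introT (on_tineP _ T0 Hv1) A1') (introT (on_tineP _ T0 Hv2) A2').
- by rewrite (depth_extends _ X2) ?Hd1 ?Hh2 ?Hh1 //; case: T1.
- by rewrite Hd2 Hh2.
Qed.

Lemma balanced_of_reach_ge0 x y F v1 v2 : is_fork (x ++ y) F ->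
  v1 <= fsize F -> v2 <= fsize F -> disjoint_over x F v1 v2 ->
  (0 <= reach (x ++ y) F v1)%R -> (0 <= reach (x ++ y) F v2)%R ->
  exists F', is_fork (x ++ y) F' /\ x_balanced x F'.
Proof.
move=> HF Hv1 Hv2 /disjoint_fix_root Hdis; have [Ht _] := HF.
rewrite -!(reach_fix_root _ Ht) // => R1 R2.
exact: balanced_of_reach_ge0_rooted (fix_root_fork HF) Hv1 Hv2 Hdis R1 R2.
Qed.

(** * Restricting a fork to a set of vertices closed under parents *)

Section Ranking.
Variables (keep : pred nat) (N : nat).

Definition kept : seq nat := filter keep (iota 0 N.+1).
Definition rank (v : nat) : nat := count keep (iota 0 v).
Definition unrank (j : nat) : nat := nth 0 kept j.

Lemma rank_kept v : v <= N -> keep v -> rank v < size kept /\ unrank (rank v) = v.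
Proof.
move=> Hv Hk; rewrite /unrank /kept /rank.
have -> : N.+1 = v + (N - v).+1 by lia.
rewrite iotaD filter_cat add0n /= Hk size_cat size_filter /=; split; first by lia.
by rewrite nth_cat size_filter ltnn subnn.
Qed.

Lemma unrank_kept j : j < size kept -> keep (unrank j) /\ unrank j <= N.
Proof.
move=> Hj; have := mem_nth 0 Hj; rewrite mem_filter mem_iota => /andP [-> H].
by split=> //; rewrite /unrank; lia.
Qed.

Lemma unrankK j : j < size kept -> rank (unrank j) = j.
Proof.
move=> Hj; have [Hk Hs] := unrank_kept Hj; have [H1 H2] := rank_kept Hs Hk.
by apply/eqP; rewrite -(nth_uniq 0 H1 Hj) ?filter_uniq ?iota_uniq //; apply/eqP.
Qed.

Lemma rank_lt u v : u < v -> keep u -> rank u < rank v.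
Proof.
move=> Huv Hk; rewrite /rank (_ : v = u + (v - u).-1.+1); last by lia.
by rewrite iotaD count_cat add0n /= Hk; lia.
Qed.

Hypothesis keep0 : keep 0.

Lemma size_kept_gt0 : 0 < size kept.
Proof. by have [H _] := rank_kept (leq0n N) keep0; lia. Qed.

Lemma unrank0 : unrank 0 = 0.
Proof. exact: (rank_kept (leq0n N) keep0).2. Qed.

Lemma unrank_eq0 j : j < size kept -> (unrank j == 0) = (j == 0).
Proof. by move=> Hj; apply/eqP/eqP => [E|->]; [rewrite -(unrankK Hj) E | exact: unrank0]. Qed.

End Ranking.

Definition restrict (F : fork_data) (keep : pred nat) : fork_data :=
  ForkData (size (kept keep (fsize F))).-1
    (fun j => rank keep (par F (unrank keep (fsize F) j)))
    (fun j => lab F (unrank keep (fsize F) j)).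

Section Restrict.
Variables (F : fork_data) (keep : pred nat).
Hypotheses (HF : rooted_tree F) (keep0 : keep 0)
  (keep_par : forall v, 0 < v <= fsize F -> keep v -> keep (par F v)).
Local Notation N := (fsize F).
Local Notation K := (kept keep N).
Local Notation un := (unrank keep N).
Local Notation F' := (restrict F keep).

Lemma fsize_restrict j : (j <= fsize F') = (j < size K).
Proof. by have := size_kept_gt0 N keep0; rewrite /=; lia. Qed.

Lemma vert_restrict : vert F' = iota 0 (size K).
Proof. by rewrite /vert; change (fsize F') with (size K).-1; rewrite prednK ?size_kept_gt0. Qed.

Lemma unrank_gt0 j : 0 < j < size K -> 0 < un j.
Proof. by case/andP=> Hj0 Hj; rewrite lt0n unrank_eq0 // -lt0n. Qed.

Lemma par_restrict j : j < size K -> un (par F' j) = par F (un j) /\ par F' j < size K.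
Proof.
move=> Hj; have [Hk Hs] := unrank_kept Hj.
have [Hp Kp] : par F (un j) <= N /\ keep (par F (un j)).
  case: (posnP (un j)) => [->|Hp]; first by rewrite HF.2.
  by have := HF.1 (un j) ltac:(lia); split; [lia | apply: keep_par; lia].
by have [A B] := rank_kept Hp Kp.
Qed.

Lemma restrict_rooted : rooted_tree F'.
Proof.
split; last by rewrite /= unrank0 // HF.2.
move=> j; rewrite fsize_restrict => Hj.
have [Hk Hs] := unrank_kept (proj2 (andP Hj)).
have Hu : 0 < un j <= N by rewrite unrank_gt0.
by rewrite /= -{2}(unrankK (proj2 (andP Hj))); apply: rank_lt; [apply: HF.1 | apply: keep_par].
Qed.

Lemma depth_restrict j : j < size K -> depth F' j = depth F (un j).
Proof.
elim/ltn_ind: j => j IH Hj; case: (posnP j) => [->|Hj0]; first by rewrite unrank0.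
have Hu : 0 < un j <= N by rewrite unrank_gt0 ?Hj0 // (unrank_kept Hj).2.
have [E Hp] := par_restrict Hj.
rewrite (depth_par restrict_rooted.1) ?fsize_restrict ?Hj0 // (depth_par HF.1 Hu) -E IH //.
by apply: restrict_rooted.1; rewrite fsize_restrict Hj0.
Qed.

Lemma height_restrict_le : height F' <= height F.
Proof.
apply: height_le => j; rewrite fsize_restrict => Hj.
by rewrite depth_restrict //; apply: depth_le_height; case: (unrank_kept Hj).
Qed.

Lemma iter_restrict k j : j < size K ->
  un (iter k (par F') j) = iter k (par F) (un j) /\ iter k (par F') j < size K.
Proof. by move=> Hj; elim: k => [|k [IH1 IH2]] //; rewrite !iterS -IH1; apply: par_restrict. Qed.

Lemma on_tine_restrict u j : j < size K -> on_tine F' u j -> on_tine F (un u) (un j).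
Proof.
move=> Hj /hasP [k _ /eqP <-]; apply/(on_tineP _ HF (unrank_kept Hj).2); exists k.
by rewrite (iter_restrict k Hj).1.
Qed.

Lemma honest_vertex_restrict w j : j < size K -> honest_vertex w F' j = honest_vertex w F (un j).
Proof. by move=> Hj; rewrite /honest_vertex unrank_eq0. Qed.

Lemma disjoint_restrict x j1 j2 : j1 < size K -> j2 < size K ->
  disjoint_over x F (un j1) (un j2) -> disjoint_over x F' j1 j2.
Proof.
move=> Hj1 Hj2 /hasPn Hdis; apply/hasPn => u; rewrite vert_restrict mem_iota => /andP [_ Hu].
apply/negP => /and4P [Hu0 Hl /(on_tine_restrict Hj1) T1 /(on_tine_restrict Hj2) T2].
have /Hdis : un u \in vert F by rewrite mem_iota add0n ltnS (unrank_kept Hu).2.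
by rewrite -lt0n unrank_gt0 ?lt0n ?Hu0 // Hl T1 T2.
Qed.

Lemma restrict_fork w : is_fork w F ->
  (forall v, v <= N -> honest_idx w (lab F v) -> keep v) -> is_fork w F'.
Proof.
move=> [_ [Hl [H1 [H2 [H3 H4]]]]] keep_honest.
split; first exact: restrict_rooted.1.
split=> [j|]; first by rewrite fsize_restrict => /unrank_kept [_ /Hl].
split; first by rewrite /= unrank0.
split=> [j|].
  rewrite fsize_restrict => Hj; have [E Hp] := par_restrict (proj2 (andP Hj)).
  by rewrite /= E; apply: H2; rewrite unrank_gt0 // (unrank_kept (proj2 (andP Hj))).2.
split=> [i Hi|u v].
  rewrite vert_restrict -(H3 i Hi) -[count _ (iota _ _)](count_map un (fun v => lab F v == i)).
  rewrite (mkseq_nth 0 K : map un _ = K) count_filter; apply: eq_in_count => v; rewrite mem_iota => /= Hv.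
  by case: eqP => [E|]; rewrite ?andbF // keep_honest ?E //; lia.
rewrite !fsize_restrict => Hu Hv hu hv huv; rewrite !depth_restrict //.
by apply: H4; rewrite ?(unrank_kept Hu).2 ?(unrank_kept Hv).2.
Qed.

Lemma restrict_closed w :
  (forall v, v <= N -> keep v -> ~~ honest_vertex w F v ->
     exists c, [/\ 0 < c <= N, keep c & par F c = v]) ->
  closed_fork w F'.
Proof.
move=> child j; rewrite fsize_restrict => Hj; apply: contraTT.
rewrite honest_vertex_restrict // => NH; have [Hk Hs] := unrank_kept Hj.
have [c [Hc Kc Pc]] := child _ Hs Hk NH; have [Rc Sc] := rank_kept (proj2 (andP Hc)) Kc.
rewrite /is_leaf negbK; apply/hasP; exists (rank keep c); first by rewrite vert_restrict mem_iota.
rewrite /= Sc Pc unrankK // eqxx andbT -lt0n.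
by have := rank_lt (proj1 (andP Hc)) keep0.
Qed.

End Restrict.

Definition on_honest_tine (w : seq bool) (F : fork_data) (v : nat) : bool :=
  has (fun h => honest_vertex w F h && on_tine F v h) (vert F).

Section HonestCore.
Variables (w : seq bool) (F : fork_data).
Hypothesis HF : rooted_fork w F.
Local Notation keep := (on_honest_tine w F).
Local Notation N := (fsize F).

Let HT : rooted_tree F := rooted_fork_tree HF.

Lemma on_honest_tineP v :
  reflect (exists h, [/\ h <= N, honest_vertex w F h & ancestor (par F) v h]) (keep v).
Proof.
apply: (iffP hasP) => [[h]|[h [Hh Hh1 Hh2]]].
  rewrite mem_iota => /andP [_ Hh] /andP [Hh1 T]; have Hh' : h <= N by lia.
  by exists h; split=> //; apply/(on_tineP _ HT Hh').
exists h; first by rewrite mem_iota; lia.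
by rewrite Hh1; apply/(on_tineP _ HT Hh).
Qed.

Lemma on_honest_tine_honest v : v <= N -> honest_vertex w F v -> keep v.
Proof. by move=> Hv Hh; apply/on_honest_tineP; exists v; split=> //; exact: ancestor_refl. Qed.

Lemma on_honest_tine_par v : keep v -> keep (par F v).
Proof.
move=> /on_honest_tineP [h [Hh Hh1 Hh2]]; apply/on_honest_tineP; exists h; split=> //.
by apply: ancestor_trans Hh2; exists 1.
Qed.

Lemma on_honest_tine_child v : keep v -> ~~ honest_vertex w F v ->
  exists c, [/\ 0 < c <= N, keep c & par F c = v].
Proof.
move=> /on_honest_tineP [h [Hh Hh1 [[|k] Hk]]] NH; first by move: NH; rewrite -Hk Hh1.
exists (iter k (par F) h); split; last by rewrite -Hk iterS.
- have := iter_par_le k HT Hh; case: (posnP (iter k (par F) h)) => [E|]; last by lia.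
  by move: NH; rewrite -Hk iterS E HT.2.
- by apply/on_honest_tineP; exists h; split=> //; exists k.
Qed.

Local Notation core := (restrict F keep).

Let keep0 : keep 0. Proof. by apply: on_honest_tine_honest. Qed.
Let keep_par v : 0 < v <= N -> keep v -> keep (par F v).
Proof. by move=> _; apply: on_honest_tine_par. Qed.

Lemma honest_core_fork : rooted_fork w core.
Proof.
split; last exact: (restrict_rooted HT keep0 keep_par).2.
apply: restrict_fork => //; first by case: HF.
by move=> v Hv Hi; apply: on_honest_tine_honest; rewrite // /honest_vertex Hi orbT.
Qed.

Lemma honest_core_closed : closed_fork w core.
Proof. by apply: restrict_closed => // v _; apply: on_honest_tine_child. Qed.

Lemma honest_core_reach_ge0 v : v <= N -> depth F v = height F ->
  exists j, [/\ j < size (kept keep N), ancestor (par F) (unrank keep N j) v &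
    (0 <= reach w core j)%R].
Proof.
move=> Hv Dv; have [[_ [Hl _]] _] := HF.
have [h [Hh Ha Hlab Hd]] := last_honest_ancestor HF.1 Hv.
have HhN : h <= N := leq_trans (ancestor_le HT Hv Ha) Hv.
have [Rj Sj] := rank_kept HhN (on_honest_tine_honest HhN Hh).
exists (rank keep h); split; rewrite ?Sj //.
rewrite reach_ge0 /gap reserveE /= Sj (depth_restrict HT keep0 keep_par Rj) Sj.
rewrite (adv_count_split w (b := lab F v)) ?Hlab ?Hl //.
by have := height_restrict_le HT keep0 keep_par; lia.
Qed.

Lemma honest_core_disjoint_reach_ge0 x v1 v2 : v1 <= N -> v2 <= N ->
  disjoint_over x F v1 v2 -> depth F v1 = height F -> depth F v2 = height F ->
  exists j1 j2, [/\ j1 <= fsize core, j2 <= fsize core, disjoint_over x core j1 j2,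
    (0 <= reach w core j1)%R & (0 <= reach w core j2)%R].
Proof.
move=> Hv1 Hv2 D D1 D2.
have [j1 [Hj1 A1 R1]] := honest_core_reach_ge0 Hv1 D1.
have [j2 [Hj2 A2 R2]] := honest_core_reach_ge0 Hv2 D2.
exists j1, j2; split; rewrite ?(fsize_restrict _ keep0) //.
by apply: disjoint_restrict => //; exact: disjoint_over_ancestor D A1 A2.
Qed.

End HonestCore.

(** * Margins *)

Lemma le_bigmax_seq_witness {d} {T : orderType d} (I : eqType) (s : seq I) (P : pred I)
    (f : I -> T) (x0 b : T) :
  (b <= \big[Order.max/x0]_(i <- s | P i) f i)%O ->
  (b <= x0)%O \/ exists i, [/\ i \in s, P i & (b <= f i)%O].
Proof.
rewrite big_seq_cond => Hb; case: (boolP (has (fun i => P i && (b <= f i)%O) s)).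
  by case/hasP => i Hi /andP [Pi Hf]; right; exists i.
move=> /hasPn Hn; case: (leP b x0) => [|Hx]; first by left.
suff : (\big[Order.max/x0]_(i <- s | (i \in s) && P i) f i < b)%O by rewrite ltNge Hb.
apply: bigmax_lt => // i /andP [Hi Pi]; have := Hn i Hi; rewrite Pi /= -ltNge; exact.
Qed.

Lemma disjoint_over_root x F : disjoint_over x F 0 0.
Proof.
apply/hasPn => u _; apply/negP => /and4P [Hu0 _ T _].
by move: T Hu0; rewrite /on_tine /= orbF => /eqP <-.
Qed.

Lemma mu_fork_ge0 x y F : (0 <= mu_fork x y F)%R <->
  exists v1 v2, [/\ v1 <= fsize F, v2 <= fsize F, disjoint_over x F v1 v2,
    (0 <= reach (x ++ y) F v1)%R & (0 <= reach (x ++ y) F v2)%R].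
Proof.
split=> [|[v1 [v2 [Hv1 Hv2 D R1 R2]]]]; last first.
  have Hin v : v <= fsize F -> v \in vert F by rewrite mem_iota; lia.
  apply: (bigmax_sup_seq _ v1) => //; first exact: Hin.
  by apply: (bigmax_sup_seq _ v2) => //; [exact: Hin | rewrite le_min R1 R2].
move=> /le_bigmax_seq_witness [R0|[v1 [Hv1 _ /le_bigmax_seq_witness [R0|[v2 [Hv2 D]]]]]].
1,2: by rewrite minxx in R0; exists 0, 0; split=> //; exact: disjoint_over_root.
rewrite le_min => /andP [R1 R2]; move: Hv1 Hv2; rewrite !mem_iota => Hv1 Hv2.
by exists v1, v2; split=> //; lia.
Qed.

Lemma closed_fork_of_balanced x y F : is_fork (x ++ y) F -> x_balanced x F ->
  exists F', [/\ is_fork (x ++ y) F', closed_fork (x ++ y) F' & (0 <= mu_fork x y F')%R].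
Proof.
move=> HF [v1 [v2 [Hv1 [Hv2 [D [D1 D2]]]]]]; have [Ht _] := HF.
have HF0 := fix_root_fork HF.
rewrite -(depth_fix_root Ht Hv1) -(height_fix_root Ht) in D1.
rewrite -(depth_fix_root Ht Hv2) -(height_fix_root Ht) in D2.
exists (restrict (fix_root F) (on_honest_tine (x ++ y) (fix_root F))); split.
- exact: (honest_core_fork HF0).1.
- exact: honest_core_closed.
- apply/mu_fork_ge0; have D0 := disjoint_fix_root D.
  by have := honest_core_disjoint_reach_ge0 HF0 Hv1 Hv2 D0 D1 D2.
Qed.

Lemma reach_le_size w F v : (reach w F v <= (size w)%:Z)%R.
Proof. by rewrite /reach reserveE; have := adv_count_le w (lab F v) (size w); lia. Qed.

Lemma mu_fork_le_size x y F : (mu_fork x y F <= (size (x ++ y))%:Z)%R.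
Proof.
apply: bigmax_le => [|v1 _]; first by rewrite minxx reach_le_size.
apply: bigmax_le => [|v2 _]; first by rewrite minxx reach_le_size.
by rewrite ge_min reach_le_size.
Qed.

Lemma int_bounded_max (Q : int -> Prop) (a B : int) :
  Q a -> (forall z, Q z -> (z <= B)%R) ->
  exists m, [/\ Q m, (a <= m)%R & forall z, Q z -> (z <= m)%R].
Proof.
move=> Qa QB.
suff max_from n : forall a, Q a -> (B - a <= n%:Z)%R ->
    exists m, [/\ Q m, (a <= m)%R & forall z, Q z -> (z <= m)%R].
  by apply: (max_from `|B - a|%N) => //; lia.
elim: n => [|n IH] {Qa}a Qa Hn; first by exists a; split=> // z /QB; lia.
case: (classic (exists z, Q z /\ (a < z)%R)) => [[z [Qz Hz]]|NE].
  by have [|m [Qm Hm Hmax]] := IH z Qz; [lia | exists m; split=> //; lia].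
exists a; split=> // z Qz; rewrite leNgt; apply/negP => Hz; apply: NE; by exists z.
Qed.

Lemma is_mu_exists x y F : is_fork (x ++ y) F -> closed_fork (x ++ y) F ->
  exists m, is_mu x y m /\ (mu_fork x y F <= m)%R.
Proof.
pose Q z := exists G, is_fork (x ++ y) G /\ closed_fork (x ++ y) G /\ mu_fork x y G = z.
move=> HF HC; have QF : Q (mu_fork x y F) by exists F.
have [z [G [_ [_ <-]]]|m [Qm Hm Hmax]] := int_bounded_max QF (B := (size (x ++ y))%:Z).
  exact: mu_fork_le_size.
by exists m; split=> //; split=> // G HG HCG; apply: Hmax; exists G.
Qed.

Theorem fact1 (x y : seq bool) :
  (exists F, is_fork (x ++ y) F /\ x_balanced x F) <->
  (exists m : int, is_mu x y m /\ (0 <= m)%R).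
Proof.
split=> [[F [HF Hb]]|[m [[[F [HF [_ <-]]] _] /mu_fork_ge0 [v1 [v2 [Hv1 Hv2 D R1 R2]]]]]].
- have [F' [HF' HC' Hmu]] := closed_fork_of_balanced HF Hb.
  have [m [Hm Hle]] := is_mu_exists HF' HC'.
  by exists m; split=> //; apply: le_trans Hle.
- exact: balanced_of_reach_ge0 HF Hv1 Hv2 D R1 R2.
Qed.
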